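(* Let $p$, $n$, $b_1,\dots,b_n$, $h$, $b$, $\mathfrak{b}$, $\mathfrak{a}$, $d$, $D$, $H$ be as in the context. For each $s\in\mathbb{S}_{p^n}$, the equation $u+\mathfrak{a}(t)=p^n-1+s$ gives a bijection from $\{t\in\mathbb{S}_{p^n}(h):\mathfrak{a}(t)\succeq s\}$ to $\{u\in\mathbb{S}_{p^n}:u\succeq s\}$, with inverse $t=H(u-s,b)$. Furthermore, if $u$ corresponds to $t$ under this bijection, then $H(s,t)=H(u,b)$ and $D(s,t)=d(u)-d(u-s)$.
   Context: Let $p$ be a prime, $n\ge1$, $\mathbb{S}_{p^n}=\{0,\dots,p^n-1\}$; write $s\in\mathbb{S}_{p^n}$ as $s=\sum_{i=1}^n s_{(n-i)}p^{n-i}$ with digits in $\{0,\dots,p-1\}$, and $s\preceq t$ means $s_{(n-i)}\le t_{(n-i)}$ for all $i$. Let $b_1,\dots,b_n$ be integers prime to $p$, $\mathfrak{b}(s)=\sum_i s_{(n-i)}p^{n-i}b_i$, and for $t\in\mathbb{Z}$ let $\mathfrak{a}(t)\in\mathbb{S}_{p^n}$ be the unique element with $\mathfrak{b}(\mathfrak{a}(t))\equiv-t\pmod{p^n}$. Let $r:\mathbb{Z}\to\mathbb{S}_{p^n}$ be reduction mod $p^n$. Fix $h\in\mathbb{Z}$, let $\mathbb{S}_{p^n}(h)=\{t\in\mathbb{Z}:h\le t<h+p^n\}$, and let $b\in\mathbb{S}_{p^n}(h)$ be the unique element with $\mathfrak{a}(b)=p^n-1$. For $s\in\mathbb{S}_{p^n}$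 and $t\in\mathbb{S}_{p^n}(h)$ define $D(s,t)=\lfloor(\mathfrak{b}(s)+t-h)/p^n\rfloor$, $H(s,t)=h+r(\mathfrak{b}(s)+t-h)$, and $d(s)=D(s,b)$. *)

From mathcomp Require Import all_boot all_order all_algebra.
Set Implicit Arguments. Unset Strict Implicit. Unset Printing Implicit Defensive.
Import Order.TTheory GRing.Theory Num.Theory.
Local Open Scope ring_scope.

(* k-th base-p digit of s (coefficient of p^k), k = 0..n-1.
   Paper's s_(n-i) is digit p s (n-i). *)
Definition digit (p s k : nat) : nat := ((s %/ p ^ k) %% p)%N.

Definition preceq (p n s t : nat) : bool :=
  [forall k : 'I_n, (digit p s k <= digit p t k)%N].

(* frak b (s) = sum_{i=1}^n s_(n-i) p^(n-i) b_i ; with k = n - i *)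
Definition bfrak (p n : nat) (c : nat -> int) (s : nat) : int :=
  \sum_(k < n) (digit p s k)%:Z * (p ^ k)%:Z * c (n - k)%N.

Definition rmod (p n : nat) (z : int) : int := (z %% (p ^ n)%:Z)%Z.

Definition Dfun (p n : nat) (c : nat -> int) (h : int) (s : nat) (t : int) : int :=
  ((bfrak p n c s + t - h) %/ (p ^ n)%:Z)%Z.

Definition Hfun (p n : nat) (c : nat -> int) (h : int) (s : nat) (t : int) : int :=
  h + rmod p n (bfrak p n c s + t - h).

(* Put N = p^n and M = N - 1, whose base-p digits are all p - 1.  When s ⪯ x,
   the differences x - s and M - x are computed digit by digit without borrows,
   so frak_b(M - x) = frak_b(M) - frak_b(x) = -b - frak_b(x) mod N.  Since frak_a
   is a section of frak_b mod N, frak_b is injective mod N on S_{p^n}; hence for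
   s ⪯ u the point t = H(u - s, b) has a(t) = M - (u - s), and conversely
   H(M - a(t), b) = t.  The identities for H and D are the cocycle rule for the
   pair (H, D) applied to frak_b(u) = frak_b(s) + frak_b(u - s). *)

From mathcomp Require Import all_boot all_order all_algebra zify ring.
Import Order.TTheory GRing.Theory Num.Theory.

Set Implicit Arguments.
Unset Strict Implicit.

Lemma preceqP p n s u :
  reflect (forall k, k < n -> digit p s k <= digit p u k) (preceq p n s u).
Proof.
apply: (iffP forallP) => le_su k => [lt_kn|]; first exact: (le_su (Ordinal lt_kn)).
exact: le_su.
Qed.

Arguments preceqP {p n s u}.

Section Digits.

Variable p : nat.
Hypothesis p_gt0 : 0 < p.

Lemma digit0 x : digit p x 0 = x %% p.
Proof. by rewrite /digit expn0 divn1. Qed.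

Lemma digitS x k : digit p x k.+1 = digit p (x %/ p) k.
Proof. by rewrite /digit expnS divnMA. Qed.

Lemma digit_lt x k : digit p x k < p.
Proof. by rewrite /digit ltn_pmod. Qed.

Lemma sum_digits n x : \sum_(k < n) digit p x k * p ^ k = x %% p ^ n.
Proof.
elim: n x => [|n IHn] x; first by rewrite big_ord0 expn0 modn1.
rewrite big_ord_recl digit0 expn0 muln1.
under eq_bigr => k _ do rewrite lift0 digitS expnS mulnCA.
rewrite -big_distrr IHn modn_divl -expnSr.
have /modn_dvdm <- : p %| p ^ n.+1 by rewrite expnS dvdn_mulr.
by rewrite /= addnC mulnC -divn_eq.
Qed.

Lemma digit_sum n (d : nat -> nat) : (forall k, k < n -> d k < p) ->
  forall k, k < n -> digit p (\sum_(i < n) d i * p ^ i) k = d k.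
Proof.
elim: n d => [|n IHn] d d_lt // k lt_kn.
have -> : \sum_(i < n.+1) d i * p ^ i = (\sum_(i < n) d i.+1 * p ^ i) * p + d 0.
  rewrite big_ord_recl expn0 muln1 addnC /= big_distrl /=.
  by congr (_ + _); apply: eq_bigr => i _; rewrite expnS [p * _]mulnC mulnA.
case: k lt_kn => [|k] lt_kn.
  by rewrite digit0 modnMDl modn_small ?d_lt.
rewrite digitS divnMDl // divn_small ?d_lt // addn0.
by apply: (IHn (fun i => d i.+1)) => // i lt_in; apply: d_lt.
Qed.

Variable n : nat.

Lemma ltn_predn_expn : (p ^ n).-1 < p ^ n.
Proof. by rewrite ltn_predL expn_gt0 p_gt0. Qed.

Lemma preceq_leq s u : s < p ^ n -> preceq p n s u -> s <= u.
Proof.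
move=> lt_s /preceqP le_su; rewrite -(modn_small lt_s) -sum_digits.
apply: leq_trans (leq_mod u (p ^ n)); rewrite -sum_digits.
by apply: leq_sum => k _; rewrite leq_mul2r le_su ?orbT.
Qed.

Lemma digit_subn s u : s < p ^ n -> u < p ^ n -> preceq p n s u ->
  forall k, k < n -> digit p (u - s) k = digit p u k - digit p s k.
Proof.
move=> lt_s lt_u /preceqP le_su.
have -> : u - s = \sum_(k < n) (digit p u k - digit p s k) * p ^ k.
  under eq_bigr do rewrite mulnBl.
  rewrite sumnB ?sum_digits ?modn_small // => k _.
  by rewrite leq_mul2r le_su ?orbT.
by apply: digit_sum => k _; apply: leq_ltn_trans (leq_subr _ _) (digit_lt _ _).
Qed.

Lemma digit_addn y z : y < p ^ n -> z < p ^ n ->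
    (forall k, k < n -> digit p y k + digit p z k < p) ->
  forall k, k < n -> digit p (y + z) k = digit p y k + digit p z k.
Proof.
move=> lt_y lt_z no_carry.
have -> : y + z = \sum_(k < n) (digit p y k + digit p z k) * p ^ k.
  by under eq_bigr do rewrite mulnDl; rewrite big_split /= !sum_digits !modn_small.
exact: digit_sum.
Qed.

Lemma digit_predn_expn k : k < n -> digit p (p ^ n).-1 k = p.-1.
Proof.
move=> lt_kn; rewrite predn_exp big_distrr /=.
by rewrite (@digit_sum n (fun _ => p.-1)) // => i _; rewrite ltn_predL.
Qed.

Lemma preceq_predn_expn x : preceq p n x (p ^ n).-1.
Proof.
apply/preceqP => k lt_kn; rewrite digit_predn_expn //.
by have := digit_lt x k; lia.
Qed.

Lemma digit_complement x : x < p ^ n ->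
  forall k, k < n -> digit p ((p ^ n).-1 - x) k = p.-1 - digit p x k.
Proof.
move=> lt_x k lt_kn.
by rewrite digit_subn ?digit_predn_expn ?preceq_predn_expn ?ltn_predn_expn.
Qed.

Lemma preceq_complement_add s x : s < p ^ n -> x < p ^ n ->
  preceq p n s x -> preceq p n s ((p ^ n).-1 - x + s).
Proof.
move=> lt_s lt_x /preceqP le_sx; apply/preceqP => k lt_kn.
have lt_xc : (p ^ n).-1 - x < p ^ n := leq_ltn_trans (leq_subr _ _) ltn_predn_expn.
rewrite digit_addn ?digit_complement ?leq_addl // => i lt_in.
by rewrite digit_complement //; have := le_sx i lt_in; have := digit_lt x i; lia.
Qed.

Lemma preceq_complement_sub s u : s < p ^ n -> u < p ^ n ->
  preceq p n s u -> preceq p n s ((p ^ n).-1 - (u - s)).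
Proof.
move=> lt_s lt_u le_su; apply/preceqP => k lt_kn.
rewrite digit_complement ?digit_subn //; last by apply: leq_ltn_trans lt_u; apply: leq_subr.
by have := preceqP le_su k lt_kn; have := digit_lt u k; lia.
Qed.

Lemma bfrak_subn c s u : s < p ^ n -> u < p ^ n -> preceq p n s u ->
  bfrak p n c (u - s) = (bfrak p n c u - bfrak p n c s)%R.
Proof.
move=> lt_s lt_u le_su; rewrite /bfrak -sumrB; apply: eq_bigr => k _.
by rewrite digit_subn // -subzn ?(preceqP le_su) // !mulrBl.
Qed.

End Digits.

Local Open Scope ring_scope.

Lemma modz_inj_of_section (N : nat) (f : nat -> int) (a : int -> nat) :
    (forall t, (a t < N)%N /\ (f (a t) = - t %[mod N%:Z])%Z) ->
  forall x y, (x < N)%N -> (y < N)%N -> (f x = f y %[mod N%:Z])%Z -> x = y.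
Proof.
move=> a_inv x y lt_x lt_y.
pose res z := absz (f z %% N%:Z)%Z.
have res_a r : (r < N)%N -> res (a (- r%:Z)) = r.
  by move=> lt_r; rewrite /res (proj2 (a_inv _)) opprK modz_small // ltz_nat lt_r.
(* G is an injective self-map of 'I_N, hence onto: every x < N is some a(-r). *)
pose G (r : 'I_N) : 'I_N := Ordinal (proj1 (a_inv (- r%:Z))).
have G_inj : injective G.
  by move=> r1 r2 /(congr1 (res \o val)) /=; rewrite !res_a //; apply: val_inj.
have [Ginv _ GinvK] := injF_bij G_inj.
have a_res z : (z < N)%N -> a (- (res z)%:Z) = z.
  move=> lt_z; have a_Ginv : a (- (Ginv (Ordinal lt_z) : nat)%:Z) = z.
    exact: (congr1 val (GinvK (Ordinal lt_z))).
  by rewrite -{1}a_Ginv res_a.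
by move=> e; rewrite -(a_res x lt_x) -(a_res y lt_y) /res e.
Qed.

Lemma eq_window (N : nat) (h x y : int) :
    h <= x < h + N%:Z -> h <= y < h + N%:Z -> (N%:Z %| x - y)%Z -> x = y.
Proof.
move=> hx hy dvd_xy; apply: (addIr (- h)).
have hx' : 0 <= x - h < N%:Z by lia.
have hy' : 0 <= y - h < N%:Z by lia.
rewrite -(modz_small hx') -(modz_small hy'); apply/eqP.
by rewrite eqz_mod_dvd (_ : x - h - (y - h) = x - y) //; ring.
Qed.

Lemma dvdz_Hfun p n c h s t : ((p ^ n)%:Z %| Hfun p n c h s t - (bfrak p n c s + t))%Z.
Proof.
rewrite /Hfun /rmod; set x := bfrak p n c s + t - h.
rewrite (_ : _ - _ = - ((x %/ (p ^ n)%:Z)%Z * (p ^ n)%:Z)) ?rpredN ?dvdz_mull //.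
by have := divz_eq x (p ^ n)%:Z; rewrite /x; lia.
Qed.

Section ShiftedRemainder.

Variables (p n : nat) (c : nat -> int) (h : int).
Hypothesis p_gt0 : (0 < p)%N.

Local Notation N := (p ^ n)%N.

Lemma Hfun_window s t : h <= Hfun p n c h s t < h + N%:Z.
Proof.
have N_gt0 : 0 < N%:Z by rewrite ltz_nat expn_gt0 p_gt0.
rewrite /Hfun /rmod lerDl modz_ge0 ?gt_eqF //= ltrD2l.
exact: ltz_pmod.
Qed.

Lemma Hfun_Dfun_add w s v b : bfrak p n c w = bfrak p n c s + bfrak p n c v ->
  Hfun p n c h w b = Hfun p n c h s (Hfun p n c h v b) /\
  Dfun p n c h w b = Dfun p n c h s (Hfun p n c h v b) + Dfun p n c h v b.
Proof.
move=> bfrak_w; have N_neq0 : N%:Z != 0 by rewrite eqz_nat -lt0n expn_gt0 p_gt0.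
rewrite /Hfun /Dfun /rmod; set y := bfrak p n c v + b - h.
have -> : bfrak p n c w + b - h =
    (y %/ N%:Z)%Z * N%:Z + (bfrak p n c s + (h + (y %% N%:Z)%Z) - h).
  by have := divz_eq y N%:Z; rewrite /y bfrak_w; lia.
by rewrite modzMDl divzMDl //; split => //; rewrite addrC.
Qed.

End ShiftedRemainder.

Section Correspondence.

Variables (p n : nat) (c : nat -> int) (h : int) (a : int -> nat) (b0 : int).
Hypothesis p_gt0 : (0 < p)%N.
Hypothesis a_inv : forall t : int,
  (a t < p ^ n)%N /\ (bfrak p n c (a t) = - t %[mod (p ^ n)%:Z])%Z.
Hypothesis a_b0 : a b0 = (p ^ n).-1.

Local Notation N := (p ^ n)%N.
Local Notation M := (p ^ n).-1.
Local Notation bf := (bfrak p n c).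
Local Notation H := (Hfun p n c h).

Lemma dvdz_bfrak_a t : (N%:Z %| bf (a t) + t)%Z.
Proof. by have /eqP := proj2 (a_inv t); rewrite eqz_mod_dvd opprK. Qed.

Lemma Hfun_complement t : h <= t < h + N%:Z -> H (M - a t) b0 = t.
Proof.
move=> ht; apply: (eq_window (Hfun_window n c h p_gt0 _ _) ht).
have bf_M_at : bf (M - a t) = bf M - bf (a t).
  by rewrite bfrak_subn ?preceq_predn_expn ?ltn_predn_expn ?(proj1 (a_inv t)).
rewrite (_ : _ - t = H (M - a t) b0 - (bf (M - a t) + b0)
                     + (bf (a b0) + b0) - (bf (a t) + t));
  last by rewrite a_b0 bf_M_at; ring.
by rewrite rpredB ?dvdz_bfrak_a // rpredD ?dvdz_Hfun ?dvdz_bfrak_a.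
Qed.

Lemma a_Hfun s u : (s < N)%N -> (u < N)%N -> preceq p n s u ->
  a (H (u - s) b0) = (M - (u - s))%N.
Proof.
move=> lt_s lt_u le_su; set t := H (u - s) b0.
have lt_us : (u - s < N)%N := leq_ltn_trans (leq_subr _ _) lt_u.
apply: (modz_inj_of_section a_inv); rewrite ?(proj1 (a_inv t)) //.
  exact: leq_ltn_trans (leq_subr _ _) (ltn_predn_expn _ _).
apply/eqP; rewrite eqz_mod_dvd bfrak_subn ?preceq_predn_expn ?ltn_predn_expn //.
rewrite (_ : _ - _ = bf (a t) + t - (bf (a b0) + b0) - (t - (bf (u - s) + b0)));
  last by rewrite a_b0; ring.
by rewrite rpredB ?dvdz_Hfun // rpredB ?dvdz_bfrak_a.
Qed.

End Correspondence.

Theorem lemma3p8 (p n : nat) (c : nat -> int) (h : int)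
    (a : int -> nat) (b0 : int) :
  prime p -> (1 <= n)%N ->
  (forall i, (1 <= i <= n)%N -> coprimez (c i) p%:Z) ->
  (forall t : int, (a t < p ^ n)%N /\
     (bfrak p n c (a t) = - t %[mod (p ^ n)%:Z])%Z) ->
  h <= b0 < h + (p ^ n)%:Z -> a b0 = (p ^ n).-1 ->
  forall s : nat, (s < p ^ n)%N ->
    (forall t : int, h <= t < h + (p ^ n)%:Z -> preceq p n s (a t) ->
       exists u : nat, [/\ (u < p ^ n)%N, preceq p n s u
                         & (u + a t = (p ^ n).-1 + s)%N]) /\
    (forall u : nat, (u < p ^ n)%N -> preceq p n s u ->
       let t := Hfun p n c h (u - s)%N b0 in
       [/\ h <= t < h + (p ^ n)%:Z, preceq p n s (a t)
         & (u + a t = (p ^ n).-1 + s)%N]) /\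
    (forall (t : int) (u : nat), h <= t < h + (p ^ n)%:Z -> preceq p n s (a t) ->
       (u + a t = (p ^ n).-1 + s)%N -> Hfun p n c h (u - s)%N b0 = t) /\
    (forall (t : int) (u : nat), h <= t < h + (p ^ n)%:Z -> preceq p n s (a t) ->
       (u < p ^ n)%N -> preceq p n s u -> (u + a t = (p ^ n).-1 + s)%N ->
       Hfun p n c h s t = Hfun p n c h u b0 /\
       Dfun p n c h s t = Dfun p n c h u b0 - Dfun p n c h (u - s)%N b0).
Proof.
move=> /prime_gt0 p_gt0 _ _ a_inv _ a_b0 s lt_s.
have lt_M := ltn_predn_expn p_gt0 n.
have left_inv t u : h <= t < h + (p ^ n)%:Z -> preceq p n s (a t) ->
    (u + a t = (p ^ n).-1 + s)%N -> Hfun p n c h (u - s)%N b0 = t.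
  move=> ht le_s_at e.
  have -> : (u - s = (p ^ n).-1 - a t)%N by have := preceq_leq lt_s le_s_at; lia.
  exact: (Hfun_complement p_gt0 a_inv a_b0).
split; [|split; [|split=> //]].
- move=> t ht le_s_at; exists ((p ^ n).-1 - a t + s)%N.
  have := preceq_leq lt_s le_s_at; have := proj1 (a_inv t).
  by split; [lia | apply: preceq_complement_add | lia].
- move=> u lt_u le_su /=; rewrite (a_Hfun h p_gt0 a_inv a_b0) //.
  have := preceq_leq lt_s le_su.
  by split; [apply: Hfun_window | apply: preceq_complement_sub | lia].
move=> t u ht le_s_at lt_u le_su e.
have bfrak_u : bfrak p n c u = bfrak p n c s + bfrak p n c (u - s).
  by rewrite bfrak_subn // addrC subrK.
have [-> ->] := Hfun_Dfun_add h p_gt0 b0 bfrak_u.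
by rewrite (left_inv t u) // addrK.
Qed.
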